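(* If $d: t\to_y^* u$ then $t\to_{y\neg gcv}^{k}\to_{ygcv}^{h} u$ where $k$ is the number of $\to_{y\neg gcv}$ steps in $d$ and $h$ is the number of $\to_{ygcv}$ steps in $d$.
   Context: Terms: $t ::= x \mid \lambda x.t \mid t\,u \mid t[x\backslash u]$ ($t[x\backslash u]$ an explicit substitution binding $x$ in $t$; terms up to $\alpha$). Values $v ::= \lambda x.t$. Substitution contexts $S ::= \langle\cdot\rangle\mid S[x\backslash u]$. For a class of contexts $K$, $K\langle\langle t\rangle\rangle$ is plugging without capture of free variables of $t$. Root rules: $S\langle\lambda x.t\rangle u\mapsto_m S\langle t[x\backslash u]\rangle$; $K\langle\langle x\rangle\rangle[x\backslash u]\mapsto_{e_K} K\langle\langle u\rangle\rangle[x\backslash u]$; $t[x\backslash S\langle v\rangle]\mapsto_{gcv} S\langle t\rangle$ if $x\notin\mathrm{fv}(t)$. Answers $a ::= v\mid a[x\backslash a']$; name contexts $N ::= \langle\cdot\rangle\mid N t\mid N[x\backslash t]$; auxiliary contexts $A ::= \langle\cdot\rangle\mid a[x\backslash A]\mid A[x\backslash t]$; silly contexts $Y ::= A\langle N\rangle$. $\to_{ym} := Y\langle\mapsto_m\rangle$; $\to_{yeAY} := A\langle\mapsto_{e_Y}\rangle$; $\to_{yeYN} := Y\langle\mapsto_{e_N}\rangle$; $\to_{ygcv}:=Y\langle\mapsto_{gcv}\rangle$; $\to_{y\neg gcv}:=\to_{ym}\cup\to_{yeAY}\cup\to_{yeYN}$; $\to_y := \to_{y\neg gcv}\cup\to_{ygcv}$.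 *)

(* Terms of the lambda calculus with explicit substitutions,
   represented with de Bruijn indices (terms are thus taken up to alpha). *)
From Stdlib Require Import Arith Bool.

Inductive term : Type :=
| Var : nat -> term
| Lam : term -> term
| App : term -> term -> term
| Es  : term -> term -> term.       (* t[x\u] : binds index 0 in t, not in u *)

Fixpoint lift (d c : nat) (t : term) : term :=
  match t with
  | Var n => if n <? c then Var n else Var (n + d)
  | Lam t => Lam (lift d (S c) t)
  | App t u => App (lift d c t) (lift d c u)
  | Es t u => Es (lift d (S c) t) (lift d c u)
  end.

Fixpoint free (k : nat) (t : term) : bool :=
  match t with
  | Var n => n =? k
  | Lam t => free (S k) t
  | App t u => free k t || free k u
  | Es t u => free (S k) t || free k u
  end.

(* down c t : remove the (unused) index c, decrementing free indices > c *)
Fixpoint down (c : nat) (t : term) : term :=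
  match t with
  | Var n => if n <=? c then Var n else Var (n - 1)
  | Lam t => Lam (down (S c) t)
  | App t u => App (down c t) (down c u)
  | Es t u => Es (down (S c) t) (down c u)
  end.

Definition is_value (t : term) : Prop := exists b, t = Lam b.

(* One-hole contexts (only the shapes needed by S, N, A, Y) *)
Inductive ctx : Type :=
| Hole : ctx
| CAppL : ctx -> term -> ctx
| CEsL : ctx -> term -> ctx        (* C[x\u]  (hole under the binder x) *)
| CEsR : term -> ctx -> ctx.       (* t[x\C]  (hole not under x) *)

(* ordinary plugging (may capture) *)
Fixpoint plug (C : ctx) (t : term) : term :=
  match C with
  | Hole => t
  | CAppL C u => App (plug C t) u
  | CEsL C u => Es (plug C t) u
  | CEsR s C => Es s (plug C t)
  end.

Fixpoint ccomp (C C' : ctx) : ctx :=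
  match C with
  | Hole => C'
  | CAppL C u => CAppL (ccomp C C') u
  | CEsL C u => CEsL (ccomp C C') u
  | CEsR s C => CEsR s (ccomp C C')
  end.

Fixpoint depth (C : ctx) : nat :=
  match C with
  | Hole => 0
  | CAppL C _ => depth C
  | CEsL C _ => S (depth C)
  | CEsR _ C => depth C
  end.

(* capture-avoiding plugging K<<t>> : t is given in the scope outside K *)
Definition cplug (C : ctx) (t : term) : term := plug C (lift (depth C) 0 t).

Inductive is_S : ctx -> Prop :=
| S_hole : is_S Hole
| S_es : forall S u, is_S S -> is_S (CEsL S u).

Inductive is_answer : term -> Prop :=
| ans_val : forall b, is_answer (Lam b)
| ans_es : forall a a', is_answer a -> is_answer a' -> is_answer (Es a a').

Inductive is_N : ctx -> Prop :=
| N_hole : is_N Hole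
| N_app : forall N t, is_N N -> is_N (CAppL N t)
| N_es : forall N t, is_N N -> is_N (CEsL N t).

Inductive is_A : ctx -> Prop :=
| A_hole : is_A Hole
| A_arg : forall a A, is_answer a -> is_A A -> is_A (CEsR a A)
| A_es : forall A t, is_A A -> is_A (CEsL A t).

Definition is_Y (C : ctx) : Prop :=
  exists A N, is_A A /\ is_N N /\ C = ccomp A N.

Inductive root_m : term -> term -> Prop :=
| rm : forall S b u, is_S S ->
    root_m (App (plug S (Lam b)) u) (plug S (Es b (lift (depth S) 0 u))).

Inductive root_e (P : ctx -> Prop) : term -> term -> Prop :=
| re : forall K u, P K ->
    root_e P (Es (cplug K (Var 0)) u) (Es (cplug K (lift 1 0 u)) u).

Inductive root_gcv : term -> term -> Prop :=
| rgcv : forall t S v, is_S S -> is_value v -> free 0 t = false ->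
    root_gcv (Es t (plug S v)) (plug S (lift (depth S) 0 (down 0 t))).

Inductive cclos (P : ctx -> Prop) (R : term -> term -> Prop) : term -> term -> Prop :=
| cc : forall C r r', P C -> R r r' -> cclos P R (plug C r) (plug C r').

Definition step_ym := cclos is_Y root_m.
Definition step_yeAY := cclos is_A (root_e is_Y).
Definition step_yeYN := cclos is_Y (root_e is_N).
Definition step_ygcv := cclos is_Y root_gcv.

Definition step_ynotgcv (t u : term) : Prop :=
  step_ym t u \/ step_yeAY t u \/ step_yeYN t u.

Definition step_y (t u : term) : Prop := step_ynotgcv t u \/ step_ygcv t u.

Fixpoint rel_pow (R : term -> term -> Prop) (n : nat) : term -> term -> Prop :=
  match n with
  | 0 => fun t u => t = u
  | S n => fun t u => exists s, R t s /\ rel_pow R n s u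
  end.

Inductive y_deriv : term -> term -> nat -> nat -> Prop :=
| yd_refl : forall t, y_deriv t t 0 0
| yd_notgcv : forall t s u k h,
    step_ynotgcv t s -> y_deriv s u k h -> y_deriv t u (S k) h
| yd_gcv : forall t s u k h,
    step_ygcv t s -> y_deriv s u k h -> y_deriv t u k (S h).

From Stdlib Require Import Arith Lia.

(* A ->ygcv step t[x\S<v>] -> S<t> followed by a ->y¬gcv step can be replaced
   by one ->y¬gcv step followed by one ->ygcv step.  As x does not occur in t,
   the erased substitution provides neither the variable occurrence of an
   e-redex nor the abstraction of an m-redex, so each redex of S<t> is already
   a redex of t[x\S<v>] (up to the index shift).  A redex inside a substitution
   of S is reached in S<t> through t, which must then be an answer, so that
   t[x\_] is an auxiliary context around the same redex before the gc step.
   Moving every gcv step of a derivation to its end this way keeps the number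
   of steps of each kind. *)

(** * Renamings *)

Definition up (f : nat -> nat) (n : nat) : nat :=
  match n with 0 => 0 | S n => S (f n) end.

Fixpoint ren (f : nat -> nat) (t : term) : term :=
  match t with
  | Var n => Var (f n)
  | Lam t => Lam (ren (up f) t)
  | App t u => App (ren f t) (ren f u)
  | Es t u => Es (ren (up f) t) (ren f u)
  end.

Lemma ren_ext f g t : (forall n, f n = g n) -> ren f t = ren g t.
Proof.
  revert f g; induction t; simpl; intros f g E; f_equal; auto;
    try (apply IHt || apply IHt1); intros [|n]; simpl; auto.
Qed.

Lemma ren_comp f g t : ren f (ren g t) = ren (fun n => f (g n)) t.
Proof.
  revert f g; induction t; simpl; intros f g; f_equal; rewrite ?IHt, ?IHt1, ?IHt2; auto;
    apply ren_ext; intros [|n]; reflexivity.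
Qed.

Lemma ren_id_on_free f t : (forall n, free n t = true -> f n = n) -> ren f t = t.
Proof.
  revert f; induction t; simpl; intros f H.
  - rewrite H; auto using Nat.eqb_refl.
  - f_equal; apply IHt; intros [|n] Hn; simpl; auto.
  - f_equal; [apply IHt1 | apply IHt2]; intros n Hn; apply H; rewrite Hn; auto with bool.
  - f_equal; [apply IHt1 | apply IHt2].
    + intros [|n] Hn; simpl; auto. rewrite H; simpl; rewrite ?Hn; auto.
    + intros n Hn; apply H; rewrite Hn; auto with bool.
Qed.

Lemma free_ren_inv f n t : free n (ren f t) = true -> exists m, f m = n /\ free m t = true.
Proof.
  revert f n; induction t as [m|t IH|t1 IH1 t2 IH2|t1 IH1 t2 IH2]; simpl; intros f n H.
  - apply Nat.eqb_eq in H; exists m; auto using Nat.eqb_refl.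
  - destruct (IH _ _ H) as [[|m] [Hm Hfree]]; simpl in Hm; try discriminate.
    injection Hm as <-; eauto.
  - apply Bool.orb_true_iff in H as [H|H].
    + destruct (IH1 _ _ H) as [m [Hm Hfree]]; exists m; rewrite Hfree; auto.
    + destruct (IH2 _ _ H) as [m [Hm Hfree]]; exists m; rewrite Hfree; auto with bool.
  - apply Bool.orb_true_iff in H as [H|H].
    + destruct (IH1 _ _ H) as [[|m] [Hm Hfree]]; simpl in Hm; try discriminate.
      injection Hm as <-; exists m; rewrite Hfree; auto.
    + destruct (IH2 _ _ H) as [m [Hm Hfree]]; exists m; rewrite Hfree; auto with bool.
Qed.

Definition lift_fun (d c n : nat) : nat := if n <? c then n else n + d.
Definition down_fun (c n : nat) : nat := if n <=? c then n else n - 1.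

Lemma lift_as_ren d c t : lift d c t = ren (lift_fun d c) t.
Proof.
  revert c; induction t; simpl; intros c; f_equal; auto;
    try (unfold lift_fun; destruct (n <? c); reflexivity);
    (rewrite IHt || rewrite IHt1); apply ren_ext; intros [|n]; unfold lift_fun; simpl; auto;
    change (S n <? S c) with (n <? c); destruct (n <? c); auto.
Qed.

Lemma down_as_ren c t : down c t = ren (down_fun c) t.
Proof.
  revert c; induction t; simpl; intros c; f_equal; auto;
    try (unfold down_fun; destruct (n <=? c); reflexivity);
    (rewrite IHt || rewrite IHt1); apply ren_ext; intros [|n]; unfold down_fun; simpl; auto;
    change (S n <=? S c) with (n <=? c); destruct (n <=? c) eqn:E; auto;
    apply Nat.leb_gt in E; lia.
Qed.

Lemma lift_fun_1_0 n : lift_fun 1 0 n = S n.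
Proof. unfold lift_fun; simpl; lia. Qed.

Lemma lift_0 t : lift 0 0 t = t.
Proof. rewrite lift_as_ren; apply ren_id_on_free; intros n _; unfold lift_fun; simpl; lia. Qed.

Lemma lift_lift_1 d t : lift d 0 (lift 1 0 t) = lift (S d) 0 t.
Proof.
  rewrite !lift_as_ren, ren_comp; apply ren_ext; intro n; unfold lift_fun; simpl; lia.
Qed.

Lemma lift_1_ren f t : lift 1 0 (ren f t) = ren (up f) (lift 1 0 t).
Proof.
  rewrite !lift_as_ren, !ren_comp; apply ren_ext; intro n; rewrite !lift_fun_1_0; reflexivity.
Qed.

Lemma free_0_lift_1 t : free 0 (lift 1 0 t) = false.
Proof.
  destruct (free 0 (lift 1 0 t)) eqn:E; auto.
  rewrite lift_as_ren in E; apply free_ren_inv in E as [m [Hm _]].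
  rewrite lift_fun_1_0 in Hm; discriminate.
Qed.

Lemma lift_1_down t : free 0 t = false -> lift 1 0 (down 0 t) = t.
Proof.
  intros H; rewrite lift_as_ren, down_as_ren, ren_comp; apply ren_id_on_free.
  intros [|n] Hn; [congruence|]; unfold down_fun, lift_fun; simpl; lia.
Qed.

Lemma down_lift_1 t : down 0 (lift 1 0 t) = t.
Proof.
  rewrite lift_as_ren, down_as_ren, ren_comp; apply ren_id_on_free.
  intros n _; rewrite lift_fun_1_0; unfold down_fun; simpl; lia.
Qed.

Lemma is_answer_ren f a : is_answer a -> is_answer (ren f a).
Proof. intros H; revert f; induction H; simpl; constructor; auto. Qed.

Lemma is_answer_ren_inv f a : is_answer (ren f a) -> is_answer a.
Proof.
  intros H; remember (ren f a) as a' eqn:E; revert f a E.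
  induction H; intros f [| | |] E; simpl in E; try discriminate;
    injection E; intros; subst; constructor; eauto.
Qed.

Lemma is_answer_lift_inv a : is_answer (lift 1 0 a) -> is_answer a.
Proof. rewrite lift_as_ren; apply is_answer_ren_inv. Qed.

Lemma is_answer_down_inv a : is_answer (down 0 a) -> is_answer a.
Proof. rewrite down_as_ren; apply is_answer_ren_inv. Qed.

(** * Syntax-directed contextual closures *)

Inductive cclass := clY | clA | clN.

Definition in_class (c : cclass) : ctx -> Prop :=
  match c with clY => is_Y | clA => is_A | clN => is_N end.

(* Contextual closure by recursion on the context, equivalent to
   cclos (in_class c) R (sclos_cclos); below an application a Y- or N-context
   continues as an N-context. *)
Inductive sclos (R : term -> term -> Prop) : cclass -> term -> term -> Prop :=
| sclos_root c t t' : R t t' -> sclos R c t t'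
| sclos_app c t t' s : c <> clA -> sclos R clN t t' -> sclos R c (App t s) (App t' s)
| sclos_esl c t t' s : sclos R c t t' -> sclos R c (Es t s) (Es t' s)
| sclos_esr c a s s' : c <> clN -> is_answer a -> sclos R c s s' -> sclos R c (Es a s) (Es a s').

Lemma plug_ccomp A N t : plug (ccomp A N) t = plug A (plug N t).
Proof. induction A; simpl; f_equal; auto. Qed.

Lemma is_N_Y N : is_N N -> is_Y N.
Proof. intros HN; exists Hole, N; repeat split; auto; constructor. Qed.

Lemma is_Y_esl C s : is_Y C -> is_Y (CEsL C s).
Proof. intros [A [N [HA [HN ->]]]]; exists (CEsL A s), N; repeat split; auto; constructor; auto. Qed.

Lemma is_Y_esr a C : is_answer a -> is_Y C -> is_Y (CEsR a C).
Proof. intros Ha [A [N [HA [HN ->]]]]; exists (CEsR a A), N; repeat split; auto; constructor; auto. Qed.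

Lemma in_class_hole c : in_class c Hole.
Proof. destruct c; simpl; [apply is_N_Y | |]; constructor. Qed.

Lemma in_class_app c C s : c <> clA -> is_N C -> in_class c (CAppL C s).
Proof. destruct c; simpl; intros Hc HC; try congruence; [apply is_N_Y|]; constructor; auto. Qed.

Lemma in_class_esl c C s : in_class c C -> in_class c (CEsL C s).
Proof. destruct c; simpl; [apply is_Y_esl | |]; constructor; auto. Qed.

Lemma in_class_esr c a C : c <> clN -> is_answer a -> in_class c C -> in_class c (CEsR a C).
Proof. destruct c; simpl; intros Hc Ha HC; try congruence; [apply is_Y_esr|constructor]; auto. Qed.

Lemma sclos_plug_N (R : term -> term -> Prop) c N r r' :
  is_N N -> c <> clA -> R r r' -> sclos R c (plug N r) (plug N r').
Proof.
  intros HN; revert c; induction HN; intros c Hc HR; simpl.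
  - apply sclos_root; auto.
  - apply sclos_app; auto; apply IHHN; auto; discriminate.
  - apply sclos_esl; auto.
Qed.

Lemma sclos_plug_A (R : term -> term -> Prop) c A x x' :
  is_A A -> c <> clN -> sclos R c x x' -> sclos R c (plug A x) (plug A x').
Proof.
  intros HA Hc Hx; induction HA; simpl; auto.
  - apply sclos_esr; auto.
  - apply sclos_esl; auto.
Qed.

Lemma sclos_unplug (R : term -> term -> Prop) c t u : sclos R c t u ->
  exists C r r', in_class c C /\ R r r' /\ t = plug C r /\ u = plug C r'.
Proof.
  induction 1 as [c t t' HR | c t t' s Hc _ [C [r [r' [HC [HR [-> ->]]]]]]
                 | c t t' s _ [C [r [r' [HC [HR [-> ->]]]]]]
                 | c a s s' Hc Ha _ [C [r [r' [HC [HR [-> ->]]]]]]].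
  - exists Hole, t, t'; auto using in_class_hole.
  - exists (CAppL C s), r, r'; auto using in_class_app.
  - exists (CEsL C s), r, r'; auto using in_class_esl.
  - exists (CEsR a C), r, r'; auto using in_class_esr.
Qed.

Lemma sclos_cclos (R : term -> term -> Prop) c t u :
  sclos R c t u <-> cclos (in_class c) R t u.
Proof.
  split.
  - intros H; destruct (sclos_unplug _ _ _ _ H) as [C [r [r' [HC [HR [-> ->]]]]]].
    constructor; auto.
  - intros [C r r' HC HR]; destruct c; simpl in HC.
    + destruct HC as [A [N [HA [HN ->]]]]; rewrite !plug_ccomp.
      apply sclos_plug_A, sclos_plug_N; auto; discriminate.
    + apply sclos_plug_A; auto using sclos_root; discriminate.
    + apply sclos_plug_N; auto; discriminate.
Qed.

(** * Root rules *)

(* sval_open u (S<\x.b>) (S<b[x\u]>) and sval_replace r (S<v>) (S<r>), with u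
   and r given in the scope outside S; var_replace c n w (K<<x_n>>) (K<<w>>)
   for K of class c, which is meant to be clN or clY. *)
Inductive sval_open : term -> term -> term -> Prop :=
| sval_open_lam u b : sval_open u (Lam b) (Es b u)
| sval_open_es u x y s : sval_open (lift 1 0 u) x y -> sval_open u (Es x s) (Es y s).

Inductive sval_replace : term -> term -> term -> Prop :=
| sval_replace_lam r b : sval_replace r (Lam b) r
| sval_replace_es r x y s : sval_replace (lift 1 0 r) x y -> sval_replace r (Es x s) (Es y s).

Inductive var_replace : cclass -> nat -> term -> term -> term -> Prop :=
| var_replace_var c n w : var_replace c n w (Var n) w
| var_replace_app c n w t t' s :
    c <> clA -> var_replace clN n w t t' -> var_replace c n w (App t s) (App t' s)
| var_replace_esl c n w t t' s :
    var_replace c (S n) (lift 1 0 w) t t' -> var_replace c n w (Es t s) (Es t' s)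
| var_replace_esr n w a s s' :
    is_answer a -> var_replace clY n w s s' -> var_replace clY n w (Es a s) (Es a s').

Inductive m_root : term -> term -> Prop :=
| m_root_intro u x y : sval_open u x y -> m_root (App x u) y.

Inductive e_root (c : cclass) : term -> term -> Prop :=
| e_root_intro t t' u : var_replace c 0 (lift 1 0 u) t t' -> e_root c (Es t u) (Es t' u).

Inductive gcv_root : term -> term -> Prop :=
| gcv_root_intro t x s :
    free 0 t = false -> sval_replace (down 0 t) x s -> gcv_root (Es t x) s.

Lemma sval_open_plug S b w : is_S S ->
  sval_open w (plug S (Lam b)) (plug S (Es b (lift (depth S) 0 w))).
Proof.
  intros HS; revert w; induction HS; intros w; simpl.
  - rewrite lift_0; constructor.
  - constructor; rewrite <- (lift_lift_1 (depth _)); apply IHHS.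
Qed.

Lemma sval_open_unplug u x y : sval_open u x y ->
  exists S b, is_S S /\ x = plug S (Lam b) /\ y = plug S (Es b (lift (depth S) 0 u)).
Proof.
  induction 1 as [u b | u x y s _ [S [b [HS [-> ->]]]]].
  - exists Hole, b; simpl; rewrite lift_0; repeat split; constructor.
  - exists (CEsL S s), b; simpl; rewrite <- (lift_lift_1 (depth _)); repeat split; constructor; auto.
Qed.

Lemma m_root_spec t u : m_root t u <-> root_m t u.
Proof.
  split.
  - intros [u' x y H]; destruct (sval_open_unplug _ _ _ H) as [S [b [HS [-> ->]]]].
    constructor; auto.
  - intros [S b u' HS]; constructor; apply sval_open_plug; auto.
Qed.

Lemma sval_replace_plug S b r : is_S S ->
  sval_replace r (plug S (Lam b)) (plug S (lift (depth S) 0 r)).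
Proof.
  intros HS; revert r; induction HS; intros r; simpl.
  - rewrite lift_0; constructor.
  - constructor; rewrite <- (lift_lift_1 (depth _)); apply IHHS.
Qed.

Lemma sval_replace_unplug r x y : sval_replace r x y ->
  exists S b, is_S S /\ x = plug S (Lam b) /\ y = plug S (lift (depth S) 0 r).
Proof.
  induction 1 as [r b | r x y s _ [S [b [HS [-> ->]]]]].
  - exists Hole, b; simpl; rewrite lift_0; repeat split; constructor.
  - exists (CEsL S s), b; simpl; rewrite <- (lift_lift_1 (depth _)); repeat split; constructor; auto.
Qed.

Lemma gcv_root_spec t u : gcv_root t u <-> root_gcv t u.
Proof.
  split.
  - intros [t' x s Hfree H]; destruct (sval_replace_unplug _ _ _ H) as [S [b [HS [-> ->]]]].
    constructor; auto; exists b; auto.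
  - intros [t' S v HS [b ->] Hfree]; constructor; auto; apply sval_replace_plug; auto.
Qed.

Lemma var_replace_plug_N c N n w : is_N N -> c <> clA ->
  var_replace c n w (plug N (Var (n + depth N))) (plug N (lift (depth N) 0 w)).
Proof.
  intros HN; revert c n w; induction HN; intros c n w Hc; simpl.
  - rewrite Nat.add_0_r, lift_0; constructor.
  - constructor; auto; apply IHHN; discriminate.
  - constructor; rewrite Nat.add_succ_r, <- (lift_lift_1 (depth _)); auto.
Qed.

Lemma var_replace_plug_Y C n w : is_Y C ->
  var_replace clY n w (plug C (Var (n + depth C))) (plug C (lift (depth C) 0 w)).
Proof.
  intros [A [N [HA [HN ->]]]]; revert n w; induction HA; intros n w; simpl.
  - apply var_replace_plug_N; auto; discriminate.
  - constructor; auto.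
  - constructor; rewrite Nat.add_succ_r, <- (lift_lift_1 (depth _)); auto.
Qed.

Lemma var_replace_unplug c n w t y : var_replace c n w t y ->
  exists K, in_class c K /\ t = plug K (Var (n + depth K)) /\ y = plug K (lift (depth K) 0 w).
Proof.
  induction 1 as [c n w | c n w t t' s Hc _ [K [HK [-> ->]]]
                 | c n w t t' s _ [K [HK [-> ->]]] | n w a s s' Ha _ [K [HK [-> ->]]]].
  - exists Hole; simpl; rewrite Nat.add_0_r, lift_0; auto using in_class_hole.
  - exists (CAppL K s); simpl; auto using in_class_app.
  - exists (CEsL K s); simpl; rewrite Nat.add_succ_r, <- (lift_lift_1 (depth _)); auto using in_class_esl.
  - exists (CEsR a K); simpl; repeat split; auto; apply (in_class_esr clY); auto; discriminate.
Qed.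

Lemma e_root_spec c t u : c <> clA -> (e_root c t u <-> root_e (in_class c) t u).
Proof.
  intros Hc; split.
  - intros [t' t'' u' H]; destruct (var_replace_unplug _ _ _ _ _ H) as [K [HK [-> ->]]].
    exact (re _ K u' HK).
  - intros [K u' HK]; constructor; unfold cplug.
    change (lift (depth K) 0 (Var 0)) with (Var (0 + depth K)).
    destruct c; simpl in HK; try congruence.
    + apply var_replace_plug_Y; auto.
    + apply var_replace_plug_N; auto.
Qed.

Inductive ngcv_kind := kind_m | kind_eAY | kind_eYN.

Definition ngcv_root (k : ngcv_kind) : term -> term -> Prop :=
  match k with kind_m => m_root | kind_eAY => e_root clY | kind_eYN => e_root clN end.

Definition ngcv_class (k : ngcv_kind) : cclass :=
  match k with kind_eAY => clA | _ => clY end.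

Lemma cclos_iff P (R R' : term -> term -> Prop) t u :
  (forall a b, R a b <-> R' a b) -> cclos P R t u <-> cclos P R' t u.
Proof. intros HR; split; intros [C r r' HC H]; constructor; auto; apply HR; auto. Qed.

Lemma step_ygcv_spec t u : step_ygcv t u <-> sclos gcv_root clY t u.
Proof. rewrite sclos_cclos; apply cclos_iff; intros; rewrite gcv_root_spec; reflexivity. Qed.

Lemma step_ynotgcv_spec t u :
  step_ynotgcv t u <-> exists k, sclos (ngcv_root k) (ngcv_class k) t u.
Proof.
  assert (Hm : step_ym t u <-> sclos (ngcv_root kind_m) clY t u).
  { rewrite sclos_cclos; apply cclos_iff; intros; rewrite m_root_spec; reflexivity. }
  assert (HeAY : step_yeAY t u <-> sclos (ngcv_root kind_eAY) clA t u).
  { rewrite sclos_cclos; apply cclos_iff; intros; simpl; rewrite e_root_spec; easy. }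
  assert (HeYN : step_yeYN t u <-> sclos (ngcv_root kind_eYN) clY t u).
  { rewrite sclos_cclos; apply cclos_iff; intros; simpl; rewrite e_root_spec; easy. }
  unfold step_ynotgcv; rewrite Hm, HeAY, HeYN; split.
  - intros [H|[H|H]]; eexists; exact H.
  - intros [[] H]; auto.
Qed.

(** * Stability under renaming *)

Lemma sval_open_ren f u x y : sval_open u x y -> sval_open (ren f u) (ren f x) (ren f y).
Proof.
  intros H; revert f; induction H; intros f; simpl; constructor.
  rewrite lift_1_ren; apply IHsval_open.
Qed.

Lemma var_replace_ren f c n w t y : var_replace c n w t y ->
  var_replace c (f n) (ren f w) (ren f t) (ren f y).
Proof.
  intros H; revert f; induction H; intros f; simpl; constructor; auto using is_answer_ren.
  rewrite lift_1_ren; apply (IHvar_replace (up f)).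
Qed.

Lemma e_root_ren c f t t' : e_root c t t' -> e_root c (ren f t) (ren f t').
Proof.
  intros []; simpl; constructor.
  rewrite lift_1_ren; apply (var_replace_ren (up f) _ 0); auto.
Qed.

Lemma ngcv_root_ren k f t t' : ngcv_root k t t' -> ngcv_root k (ren f t) (ren f t').
Proof.
  destruct k; simpl; [intros []; constructor; apply sval_open_ren; auto | |];
    apply e_root_ren.
Qed.

Lemma sclos_ren (R : term -> term -> Prop) f c t t' :
  (forall f t t', R t t' -> R (ren f t) (ren f t')) ->
  sclos R c t t' -> sclos R c (ren f t) (ren f t').
Proof.
  intros HR H; revert f; induction H; intros f; simpl.
  - apply sclos_root; auto.
  - apply sclos_app; auto.
  - apply sclos_esl; auto.
  - apply sclos_esr; auto using is_answer_ren.
Qed.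

Ltac invert_ren E :=
  match type of E with
  | _ = ren _ ?t => destruct t; simpl in E; try discriminate; injection E; intros; subst
  end.

Lemma sval_open_ren_inv f u0 x0 y : sval_open (ren f u0) (ren f x0) y ->
  exists y0, sval_open u0 x0 y0 /\ y = ren f y0.
Proof.
  intros H; remember (ren f u0) as u eqn:Eu; remember (ren f x0) as x eqn:Ex.
  revert f u0 x0 Eu Ex; induction H; intros f u0 x0 Eu Ex; invert_ren Ex.
  - exists (Es x0 u0); split; [constructor | reflexivity].
  - destruct (IHsval_open (up f) (lift 1 0 u0) x0_1) as [y0 [Hy0 ->]];
      auto using lift_1_ren.
    exists (Es y0 x0_2); split; constructor; auto.
Qed.

Lemma var_replace_ren_inv f c n w t0 y : (forall k, f k = f n -> k = n) ->
  var_replace c (f n) (ren f w) (ren f t0) y ->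
  exists y0, var_replace c n w t0 y0 /\ y = ren f y0.
Proof.
  intros Hinj H; remember (f n) as n' eqn:En; remember (ren f w) as w' eqn:Ew;
    remember (ren f t0) as t eqn:Et.
  revert f n w t0 Hinj En Ew Et; induction H; intros f n0 w0 t0 Hinj En Ew Et; invert_ren Et.
  - rewrite (Hinj n1) by auto; exists w0; split; [constructor | auto].
  - destruct (IHvar_replace f n0 w0 t0_1) as [y0 [Hy0 ->]]; auto.
    exists (App y0 t0_2); split; constructor; auto.
  - assert (Hinj' : forall k, up f k = up f (S n0) -> k = S n0).
    { intros [|k] Hk; simpl in Hk; try discriminate; injection Hk as Hk; rewrite (Hinj k Hk); auto. }
    destruct (IHvar_replace (up f) (S n0) (lift 1 0 w0) t0_1) as [y0 [Hy0 ->]];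
      auto using lift_1_ren.
    exists (Es y0 t0_2); split; constructor; auto.
  - destruct (IHvar_replace f n0 w0 t0_2) as [y0 [Hy0 ->]]; auto.
    exists (Es t0_1 y0); split; constructor; eauto using is_answer_ren_inv.
Qed.

Lemma e_root_ren_inv c f t0 t' : e_root c (ren f t0) t' ->
  exists t0', e_root c t0 t0' /\ t' = ren f t0'.
Proof.
  intros H; remember (ren f t0) as t eqn:Et; destruct H; invert_ren Et.
  rewrite lift_1_ren in H.
  destruct (var_replace_ren_inv (up f) _ 0 _ _ _ ltac:(intros [|k] Hk; easy) H) as [y0 [Hy0 ->]].
  exists (Es y0 t0_2); split; constructor; auto.
Qed.

Lemma ngcv_root_ren_inv k f t0 t' : ngcv_root k (ren f t0) t' ->
  exists t0', ngcv_root k t0 t0' /\ t' = ren f t0'.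
Proof.
  destruct k; simpl; [| apply e_root_ren_inv | apply e_root_ren_inv].
  intros H; remember (ren f t0) as t eqn:Et; destruct H; invert_ren Et.
  destruct (sval_open_ren_inv _ _ _ _ H) as [y0 [Hy0 ->]].
  exists y0; split; auto; constructor; auto.
Qed.

Lemma sclos_ren_inv (R : term -> term -> Prop) f c t0 t' :
  (forall f t0 t', R (ren f t0) t' -> exists t0', R t0 t0' /\ t' = ren f t0') ->
  sclos R c (ren f t0) t' -> exists t0', sclos R c t0 t0' /\ t' = ren f t0'.
Proof.
  intros HR H; remember (ren f t0) as t eqn:Et; revert f t0 Et.
  induction H; intros f t0 Et.
  - subst; destruct (HR _ _ _ H) as [t1 [H1 ->]].
    exists t1; split; auto; constructor; auto.
  - invert_ren Et; destruct (IHsclos f t0_1) as [y0 [Hy0 ->]]; auto.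
    exists (App y0 t0_2); split; [apply sclos_app | ]; auto.
  - invert_ren Et; destruct (IHsclos (up f) t0_1) as [y0 [Hy0 ->]]; auto.
    exists (Es y0 t0_2); split; [apply sclos_esl | ]; auto.
  - invert_ren Et; destruct (IHsclos f t0_2) as [y0 [Hy0 ->]]; auto.
    exists (Es t0_1 y0); split; [apply sclos_esr | ]; eauto using is_answer_ren_inv.
Qed.

Lemma var_replace_lift_1 c n w t y : var_replace c n w t y ->
  var_replace c (S n) (lift 1 0 w) (lift 1 0 t) (lift 1 0 y).
Proof. rewrite !lift_as_ren, <- (lift_fun_1_0 n); apply var_replace_ren. Qed.

Lemma var_replace_lift_1_inv c n w r y : var_replace c (S n) (lift 1 0 w) (lift 1 0 r) y ->
  exists r', var_replace c n w r r' /\ y = lift 1 0 r'.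
Proof.
  rewrite !lift_as_ren, <- (lift_fun_1_0 n); intros H.
  apply var_replace_ren_inv in H as [r' [H ->]].
  - exists r'; rewrite lift_as_ren; auto.
  - intros k; rewrite !lift_fun_1_0; congruence.
Qed.

(** * Postponing garbage collection *)

(* Exactly when sclos (ngcv_root k) c is included in ->y¬gcv: m- and
   e_N-redexes may also sit in name contexts (below an application), while
   e_Y-redexes are only contracted in auxiliary contexts. *)
Definition kind_fits (k : ngcv_kind) (c : cclass) : Prop := k = kind_eAY -> c = clA.

Lemma ngcv_kind_fits k : kind_fits k (ngcv_class k).
Proof. destruct k; simpl; congruence. Qed.

Lemma sval_replace_answer r x s : sval_replace r x s -> is_answer s ->
  is_answer r /\ is_answer x.
Proof.
  induction 1 as [r b | r x y s _ IH]; intros Hs.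
  - split; auto; constructor.
  - inversion Hs; subst; destruct IH as [Hr Hx]; auto.
    split; [apply is_answer_lift_inv | constructor]; auto.
Qed.

Lemma answer_not_var_replace a c n w y : is_answer a -> ~ var_replace c n w a y.
Proof.
  intros Ha; revert c n w y; induction Ha; intros c n w y H; inversion H; subst;
    [eapply IHHa1 | eapply IHHa2]; eauto.
Qed.

Lemma answer_ngcv_normal k c a y : is_answer a -> ~ sclos (ngcv_root k) c a y.
Proof.
  intros Ha; revert c y; induction Ha; intros c y H; inversion H; subst.
  - destruct k; simpl in *; inversion H0.
  - destruct k; simpl in *; inversion H0; subst; eapply (answer_not_var_replace _ _ _ _ _ Ha1); eauto.
  - eapply IHHa1; eauto.
  - eapply IHHa2; eauto.
Qed.

Lemma var_replace_free c n w t y : var_replace c n w t y -> free n t = true.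
Proof. induction 1; simpl; rewrite ?Nat.eqb_refl, ?IHvar_replace; auto with bool. Qed.

Lemma sval_replace_var_replace r x s c n w y :
  sval_replace r x s -> var_replace c n w s y ->
  (exists r', var_replace c n w r r' /\ sval_replace r' x y) \/
  (is_answer r /\ c = clY /\ exists x', var_replace c n w x x' /\ sval_replace r x' y).
Proof.
  intros H; revert n w y; induction H as [r b | r x s0 s Hs IH]; intros n w y E.
  - left; exists y; split; auto; constructor.
  - inversion E as [| | ? ? ? ? y' ? Ey | ? ? a ? s' Ha Es']; subst.
    + destruct (IH _ _ _ Ey) as [[r' [Hr' Hy']] | [Hr [-> [x' [Hx' Hy']]]]].
      * apply var_replace_lift_1_inv in Hr' as [r'' [Hr'' ->]].
        left; exists r''; split; auto; constructor; auto.
      * right; repeat split; auto using is_answer_lift_inv.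
        exists (Es x' s); split; constructor; auto.
    + destruct (sval_replace_answer _ _ _ Hs Ha) as [Hr Hx].
      right; repeat split; auto using is_answer_lift_inv.
      exists (Es x s'); split; constructor; auto.
Qed.

Lemma sval_replace_sval_open r x s w u : sval_replace r x s -> sval_open w s u ->
  exists v, sval_open w r v /\ sval_replace v x u.
Proof.
  intros H; revert w u; induction H as [r b | r x s0 s Hs IH]; intros w u E.
  - exists u; split; auto; constructor.
  - inversion E as [| ? ? y' ? Ey]; subst.
    destruct (IH _ _ Ey) as [v [Hv Hy']].
    rewrite !lift_as_ren in Hv; apply sval_open_ren_inv in Hv as [v' [Hv' ->]].
    exists v'; split; auto; constructor; rewrite lift_as_ren; auto.
Qed.

Lemma sval_replace_ngcv_step k c r x s u :
  kind_fits k c -> sval_replace r x s -> sclos (ngcv_root k) c s u ->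
  (is_answer r /\ c <> clN /\ exists x', sclos (ngcv_root k) c x x' /\ sval_replace r x' u) \/
  (exists r', sclos (ngcv_root k) c r r' /\ sval_replace r' x u).
Proof.
  intros Hk H; revert u; induction H as [r b | r x s0 s Hs IH]; intros u E.
  - right; exists u; split; auto; constructor.
  - inversion E as [? ? ? Hroot | | ? ? y' ? Ey | ? ? ? s' Hc Ha Es']; subst.
    + destruct k; simpl in Hroot; inversion Hroot as [? y' ? Ey]; subst.
      (* the variable of the e-redex cannot occur in lift 1 0 r *)
      all: destruct (sval_replace_var_replace _ _ _ _ _ _ _ Hs Ey)
             as [[r' [Hr' _]] | [Hr [Ec [x' [Hx' Hy']]]]];
        [apply var_replace_free in Hr'; rewrite free_0_lift_1 in Hr'; discriminate |].
      * rewrite (Hk eq_refl); left; repeat split; auto using is_answer_lift_inv; try discriminate.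
        exists (Es x' s); split; [apply sclos_root | ]; constructor; auto.
      * discriminate.
    + destruct (IH _ Ey) as [[Hr [Hc [x' [Hx' Hy']]]] | [r' [Hr' Hy']]].
      * left; repeat split; auto using is_answer_lift_inv.
        exists (Es x' s); split; [apply sclos_esl | constructor]; auto.
      * rewrite lift_as_ren in Hr'.
        apply sclos_ren_inv in Hr' as [r'' [Hr'' ->]]; [| exact (ngcv_root_ren_inv k)].
        right; exists r''; split; auto; constructor; rewrite lift_as_ren; auto.
    + destruct (sval_replace_answer _ _ _ Hs Ha) as [Hr Hx].
      left; repeat split; auto using is_answer_lift_inv.
      exists (Es x s'); split; [apply sclos_esr | constructor]; auto.
Qed.

Lemma gcv_root_lift_1 w x s : sval_replace w x s -> gcv_root (Es (lift 1 0 w) x) s.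
Proof. constructor; [apply free_0_lift_1 | rewrite down_lift_1; auto]. Qed.

Lemma gcv_root_ngcv_step_swap k c c' t s u :
  kind_fits k c -> gcv_root t s -> sclos (ngcv_root k) c s u ->
  exists s', sclos (ngcv_root k) c t s' /\ sclos gcv_root c' s' u.
Proof.
  intros Hk [t0 x s0 Hfree Hs] E.
  destruct (sval_replace_ngcv_step _ _ _ _ _ _ Hk Hs E)
    as [[Ht0 [Hc [x' [Hx' Hu]]]] | [r' [Hr' Hu]]].
  - exists (Es t0 x'); split.
    + apply sclos_esr; auto using is_answer_down_inv.
    + apply sclos_root; constructor; auto.
  - exists (Es (lift 1 0 r') x); split.
    + apply sclos_esl; rewrite <- (lift_1_down t0 Hfree), !lift_as_ren.
      apply sclos_ren; auto using ngcv_root_ren.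
    + apply sclos_root, gcv_root_lift_1; auto.
Qed.

Lemma gcv_step_answer_inv c t s : sclos gcv_root c t s -> is_answer s -> is_answer t.
Proof.
  induction 1 as [? t s [t0 x s0 Hfree Hs] | | ? t t' s0 _ IH | ? a s0 s0' _ Ha _ IH];
    intros Hans.
  - destruct (sval_replace_answer _ _ _ Hs Hans); constructor; auto using is_answer_down_inv.
  - inversion Hans.
  - inversion Hans; subst; constructor; auto.
  - inversion Hans; subst; constructor; auto.
Qed.

Lemma gcv_step_sval_open c t s w u : sclos gcv_root clN t s -> sval_open w s u ->
  exists u', sval_open w t u' /\ sclos gcv_root c u' u.
Proof.
  intros H; remember clN as cN eqn:EcN; revert w u.
  induction H as [? t s [t0 x s0 Hfree Hs] | | ? t t' s0 H IH | ? a s0 s0' Hc]; intros w u E; subst.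
  - destruct (sval_replace_sval_open _ _ _ _ _ Hs E) as [v [Hv Hu]].
    exists (Es (lift 1 0 v) x); split.
    + constructor; rewrite <- (lift_1_down t0 Hfree), !lift_as_ren; apply sval_open_ren; auto.
    + apply sclos_root, gcv_root_lift_1; auto.
  - inversion E.
  - inversion E as [| ? ? y' ? Ey]; subst.
    destruct (IH eq_refl _ _ Ey) as [u' [Hu' Hy']].
    exists (Es u' s0); split; [constructor | apply sclos_esl]; auto.
  - congruence.
Qed.

Lemma gcv_step_var_replace c t s c' n w y : sclos gcv_root c t s -> var_replace c' n w s y ->
  exists y0, var_replace c' n w t y0 /\ sclos gcv_root c y0 y.
Proof.
  intros H; revert c' n w y.
  induction H as [? t s [t0 x s0 Hfree Hs] | ? t t' s0 Hc _ IH | ? t t' s0 Ht IH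
                 | ? a s0 s0' Hc Ha _ IH]; intros c' n w y E.
  - destruct (sval_replace_var_replace _ _ _ _ _ _ _ Hs E)
      as [[r' [Hr' Hy]] | [Ht0 [-> [x' [Hx' Hy]]]]].
    + exists (Es (lift 1 0 r') x); split.
      * constructor; rewrite <- (lift_1_down t0 Hfree); apply var_replace_lift_1; auto.
      * apply sclos_root, gcv_root_lift_1; auto.
    + exists (Es t0 x'); split.
      * constructor; auto using is_answer_down_inv.
      * apply sclos_root; constructor; auto.
  - inversion E as [| ? ? ? ? y' ? Hc' Ey | |]; subst.
    destruct (IH _ _ _ _ Ey) as [y0 [Hy0 Hy']].
    exists (App y0 s0); split; [constructor | apply sclos_app]; auto.
  - inversion E as [| | ? ? ? ? y' ? Ey | ? ? ? ? s' Ha Es']; subst.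
    + destruct (IH _ _ _ _ Ey) as [y0 [Hy0 Hy']].
      exists (Es y0 s0); split; [constructor | apply sclos_esl]; auto.
    + exists (Es t s'); split; [constructor | apply sclos_esl]; eauto using gcv_step_answer_inv.
  - inversion E as [| | ? ? ? ? y' ? Ey | ? ? ? ? s' _ Es']; subst.
    + exfalso; eapply answer_not_var_replace; eauto.
    + destruct (IH _ _ _ _ Es') as [y0 [Hy0 Hy']].
      exists (Es a y0); split; [constructor | apply sclos_esr]; auto.
Qed.

Lemma gcv_ngcv_swap k c c' t s u :
  kind_fits k c' -> sclos gcv_root c t s -> sclos (ngcv_root k) c' s u ->
  exists s', sclos (ngcv_root k) c' t s' /\ sclos gcv_root c s' u.
Proof.
  intros Hk H; revert c' Hk u.
  induction H as [c t s Hroot | c t t' s0 Hc Ht IH | c t t' s0 Ht IH | c a s0 s0' Hc Ha _ IH];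
    intros c' Hk u E.
  - eapply gcv_root_ngcv_step_swap; eauto.
  - inversion E as [? ? ? Hroot | ? ? t'' ? Hc' Et' | |]; subst.
    + destruct k; simpl in Hroot; inversion Hroot as [? ? y Hy]; subst.
      destruct (gcv_step_sval_open c _ _ _ _ Ht Hy) as [u' [Hu' Hy']].
      exists u'; split; auto; apply sclos_root; constructor; auto.
    + assert (Hk' : kind_fits k clN) by (intros ->; exfalso; apply Hc', Hk; reflexivity).
      destruct (IH _ Hk' _ Et') as [s' [Hs' Hs'u]].
      exists (App s' s0); split; apply sclos_app; auto.
  - inversion E as [? ? ? Hroot | | ? ? t'' ? Et' | ? ? ? s' Hc' Ha Es']; subst.
    + destruct k; simpl in Hroot; inversion Hroot as [? y ? Hy]; subst;
        destruct (gcv_step_var_replace _ _ _ _ _ _ _ Ht Hy) as [y0 [Hy0 Hy']];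
        exists (Es y0 s0); (split; [apply sclos_root; constructor | apply sclos_esl]; auto).
    + destruct (IH _ Hk _ Et') as [s' [Hs' Hs'u]].
      exists (Es s' s0); split; apply sclos_esl; auto.
    + exists (Es t s'); split; [apply sclos_esr | apply sclos_esl]; eauto using gcv_step_answer_inv.
  - inversion E as [? ? ? Hroot | | ? ? a' ? Ea | ? ? ? s' Hc' _ Es']; subst.
    + destruct k; simpl in Hroot; inversion Hroot as [? y ? Hy]; subst;
        exfalso; eapply answer_not_var_replace; eauto.
    + exfalso; eapply answer_ngcv_normal; eauto.
    + destruct (IH _ Hk _ Es') as [s'' [Hs'' Hs''u]].
      exists (Es a s''); split; apply sclos_esr; auto.
Qed.

Lemma step_ygcv_postpone n t s u : step_ygcv t s -> rel_pow step_ynotgcv n s u ->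
  exists s', rel_pow step_ynotgcv n t s' /\ step_ygcv s' u.
Proof.
  revert t s; induction n as [|n IH]; simpl; intros t s Hts Hsu.
  - subst; exists t; auto.
  - destruct Hsu as [s1 [Hss1 Hs1u]].
    apply step_ynotgcv_spec in Hss1 as [k Hss1]; apply step_ygcv_spec in Hts.
    destruct (gcv_ngcv_swap _ _ _ _ _ _ (ngcv_kind_fits k) Hts Hss1) as [t1 [Htt1 Ht1s1]].
    apply step_ygcv_spec in Ht1s1.
    destruct (IH _ _ Ht1s1 Hs1u) as [s' [Ht1s' Hs'u]].
    exists s'; split; auto; exists t1; split; auto.
    apply step_ynotgcv_spec; eauto.
Qed.

Theorem proposition11p6 (t u : term) (k h : nat) :
  y_deriv t u k h ->
  exists s, rel_pow step_ynotgcv k t s /\ rel_pow step_ygcv h s u.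
Proof.
  induction 1 as [t | t s u k h Hts _ [s' [Hk Hh]] | t s u k h Hts _ [s' [Hk Hh]]].
  - exists t; simpl; auto.
  - exists s'; split; auto; exists s; auto.
  - destruct (step_ygcv_postpone _ _ _ _ Hts Hk) as [t' [Htt' Ht's']].
    exists t'; split; auto; exists s'; auto.
Qed.
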